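(* Let $d>1$ and $N\ge 1$. Suppose $x_1,\dots,x_N\in\mathbb{H}^d$ and $w_1,\dots,w_N\in\mathbb{R}$ satisfy: (1) $|x_i|^2=1$ for $i=1,\dots,N$; (2) $|\langle x_i,x_j\rangle|^2=|\langle x_{i'},x_{j'}\rangle|^2$ for all $1\le i<j\le N$ and $1\le i'<j'\le N$; (3) $\sum_{i=1}^N w_i x_ix_i^\dagger = I_d$. Then $w_1=\cdots=w_N=d/N$ and $\{x_1,\dots,x_N\}$ is a tight simplex in $\mathbb{H}\mathbb{P}^{d-1}$.
   Context: $\mathbb{H}$ denotes the quaternions; $\langle x,y\rangle=x^\dagger y$ on $\mathbb{H}^d$, with $\dagger$ the conjugate transpose. $\mathbb{H}\mathbb{P}^{d-1}$ is the space of quaternionic lines in $\mathbb{H}^d$ (scalars acting on the right), points represented by unit vectors. A tight simplex of $N$ points in $\mathbb{H}\mathbb{P}^{d-1}$ is a set of $N$ distinct points $x_1,\dots,x_N$ with $|\langle x_i,x_j\rangle|^2=\frac{N-d}{d(N-1)}$ for all $i\ne j$. *)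

From mathcomp Require Import all_boot all_order all_algebra.
Set Implicit Arguments. Unset Strict Implicit. Unset Printing Implicit Defensive.
Import Order.TTheory GRing.Theory Num.Theory.
Local Open Scope ring_scope.

Record quat (R : realFieldType) := Quat { qre : R; qi : R; qj : R; qk : R }.

Section Quat.
Variable R : realFieldType.

Definition q0 : quat R := Quat 0 0 0 0.
Definition q1 : quat R := Quat 1 0 0 0.
Definition qadd (p q : quat R) : quat R :=
  Quat (qre p + qre q) (qi p + qi q) (qj p + qj q) (qk p + qk q).
Definition qmul (p q : quat R) : quat R :=
  Quat (qre p * qre q - qi p * qi q - qj p * qj q - qk p * qk q)
       (qre p * qi q + qi p * qre q + qj p * qk q - qk p * qj q)
       (qre p * qj q - qi p * qk q + qj p * qre q + qk p * qi q)
       (qre p * qk q + qi p * qj q - qj p * qi q + qk p * qre q).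
Definition qconj (p : quat R) : quat R := Quat (qre p) (- qi p) (- qj p) (- qk p).
Definition qscale (a : R) (p : quat R) : quat R :=
  Quat (a * qre p) (a * qi p) (a * qj p) (a * qk p).
Definition qnorm2 (p : quat R) : R :=
  qre p ^+ 2 + qi p ^+ 2 + qj p ^+ 2 + qk p ^+ 2.

Definition hinner (d : nat) (x y : 'I_d -> quat R) : quat R :=
  \big[qadd/q0]_(k < d) qmul (qconj (x k)) (y k).
Definition hnorm2 (d : nat) (x : 'I_d -> quat R) : R :=
  \sum_(k < d) qnorm2 (x k).

Definition same_line (d : nat) (x y : 'I_d -> quat R) : Prop :=
  exists l : quat R, l <> q0 /\ forall k, y k = qmul (x k) l.

Definition tight_simplex (d N : nat) (x : 'I_N -> 'I_d -> quat R) : Prop :=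
  (forall i, hnorm2 (x i) = 1) /\
  (forall i j : 'I_N, i != j -> ~ same_line (x i) (x j)) /\
  (forall i j : 'I_N, i != j ->
     qnorm2 (hinner (x i) (x j)) = (N%:R - d%:R) / (d%:R * (N%:R - 1))).

End Quat.

(* Write n_ij = |<x_i, x_j>|^2.  Sandwiching the frame identity
   sum_i w_i x_i x_i^† = I between x_j^† and x_j gives the row sums
   sum_i w_i n_ji = |x_j|^2 = 1, and its trace gives sum_i w_i = d.  Since
   n_jj = 1 and n_ji = c for i <> j, every row reads w_j + c (d - w_j) = 1.
   Here c <> 1 (otherwise d = 1), so all weights agree, hence equal d/N, and
   substituting back yields c = (N - d)/(d (N - 1)) <> 1.  As vectors spanning
   the same line have n = 1, the points are distinct. *)
From mathcomp Require Import all_boot all_order all_algebra.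
From mathcomp Require Import ring zify.
Set Implicit Arguments. Unset Strict Implicit. Unset Printing Implicit Defensive.
Import Order.TTheory GRing.Theory Num.Theory.
Local Open Scope ring_scope.

Section QuaternionInnerProduct.
Variable R : realFieldType.
Implicit Types p q r : quat R.

Lemma qadd_big_morph (f : quat R -> R) :
  (forall p q, f (qadd p q) = f p + f q) -> f (q0 R) = 0 ->
  forall n (F : 'I_n -> quat R),
  f (\big[@qadd R/q0 R]_(i < n) F i) = \sum_(i < n) f (F i).
Proof. by move=> fD f0 n F; apply: (big_morph f fD f0). Qed.

Lemma qconj_big n (F : 'I_n -> quat R) :
  qconj (\big[@qadd R/q0 R]_(i < n) F i) = \big[@qadd R/q0 R]_(i < n) qconj (F i).
Proof.
apply: (big_morph (@qconj R)); last by rewrite /qconj /q0 /=; congr Quat; ring.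
by move=> p q; rewrite /qconj /qadd /=; congr Quat; ring.
Qed.

Lemma qnorm2M p q : qnorm2 (qmul p q) = qnorm2 p * qnorm2 q.
Proof. rewrite /qnorm2 /qmul /=; ring. Qed.

Lemma qnorm2_qconj p : qnorm2 (qconj p) = qnorm2 p.
Proof. rewrite /qnorm2 /qconj /=; ring. Qed.

Lemma qre_big_scale_sandwich n (w : 'I_n -> R) (F : 'I_n -> quat R) p r :
  qre (qmul (qmul p (\big[@qadd R/q0 R]_(i < n) qscale (w i) (F i))) r)
  = \sum_(i < n) w i * qre (qmul (qmul p (F i)) r).
Proof.
rewrite (@qadd_big_morph (fun u => qre (qmul (qmul p u) r))).
- by apply: eq_bigr => i _; rewrite /qscale /qmul /=; ring.
- by move=> u v; rewrite /qmul /qadd /=; ring.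
- by rewrite /qmul /q0 /=; ring.
Qed.

Lemma hinnerC d (y z : 'I_d -> quat R) : hinner z y = qconj (hinner y z).
Proof.
rewrite /hinner qconj_big; apply: eq_bigr => k _.
by rewrite /qconj /qmul /=; congr Quat; ring.
Qed.

Lemma qnorm2_hinnerC d (y z : 'I_d -> quat R) :
  qnorm2 (hinner z y) = qnorm2 (hinner y z).
Proof. by rewrite hinnerC qnorm2_qconj. Qed.

Lemma qnorm2_hinner d (y z : 'I_d -> quat R) : qnorm2 (hinner y z) =
  \sum_(a < d) \sum_(b < d) qre (qmul (qmul (qconj (y a)) (qmul (z a) (qconj (z b)))) (y b)).
Proof.
have -> : qnorm2 (hinner y z) = qre (qmul (hinner y z) (qconj (hinner y z))).
  by rewrite /qnorm2 /qmul /qconj /=; ring.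
rewrite {2}/hinner qconj_big.
rewrite (@qadd_big_morph (fun u => qre (qmul (hinner y z) u))); first last.
- by rewrite /qmul /q0 /=; ring.
- by move=> p q; rewrite /qmul /qadd /=; ring.
rewrite exchange_big; apply: eq_bigr => b _.
rewrite /hinner (@qadd_big_morph (fun u => qre (qmul u (qconj (qmul (qconj (y b)) (z b)))))).
- by apply: eq_bigr => a _; rewrite /qmul /qconj /=; ring.
- by move=> p q; rewrite /qmul /qadd /=; ring.
- by rewrite /qmul /q0 /=; ring.
Qed.

Lemma same_line_refl d (y : 'I_d -> quat R) : same_line y y.
Proof.
exists (q1 R); split; first by case=> /eqP; rewrite oner_eq0.
by move=> k; rewrite /qmul /q1 /=; case: (y k) => a b c e /=; congr Quat; ring.
Qed.

(* Writing z = y l, unit norms force |l| = 1, and then <y, z> = |y|^2 l = l. *)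
Lemma qnorm2_hinner_same_line d (y z : 'I_d -> quat R) :
  hnorm2 y = 1 -> hnorm2 z = 1 -> same_line y z -> qnorm2 (hinner y z) = 1.
Proof.
move=> y1 z1 [l [_ zl]].
have l1 : qnorm2 l = 1.
  rewrite -z1 /hnorm2 (eq_bigr (fun k => qnorm2 (y k) * qnorm2 l)); last first.
    by move=> k _; rewrite zl qnorm2M.
  by rewrite -mulr_suml -/(hnorm2 y) y1 mul1r.
have coordE (f : quat R -> R) : (forall p q, f (qadd p q) = f p + f q) ->
    f (q0 R) = 0 -> (forall p, f (qmul (qconj p) (qmul p l)) = qnorm2 p * f l) ->
    f (hinner y z) = f l.
  move=> fD f0 fM; rewrite /hinner qadd_big_morph //.
  rewrite (eq_bigr (fun k => qnorm2 (y k) * f l)); last by move=> k _; rewrite zl fM.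
  by rewrite -mulr_suml -/(hnorm2 y) y1 mul1r.
rewrite -l1 /qnorm2 (coordE (@qre R)) ?(coordE (@qi R)) ?(coordE (@qj R))
  ?(coordE (@qk R)) //; by [|move=> p; rewrite /qnorm2 /qmul /qconj /=; ring].
Qed.

End QuaternionInnerProduct.

Section TightFrame.
Variables (R : realFieldType) (d N : nat).
Variables (x : 'I_N -> 'I_d -> quat R) (w : 'I_N -> R).
Hypothesis x_unit : forall i, hnorm2 (x i) = 1.
Hypothesis frame : forall a b : 'I_d,
  \big[@qadd R/q0 R]_(i < N) qscale (w i) (qmul (x i a) (qconj (x i b)))
  = (if a == b then q1 R else q0 R).

Lemma frame_weight_sum : \sum_(i < N) w i = d%:R.
Proof.
have frame_diag a : \sum_(i < N) w i * qnorm2 (x i a) = 1.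
  have := congr1 (@qre R) (frame a a); rewrite eqxx /= qadd_big_morph // => <-.
  by apply: eq_bigr => i _; rewrite /qscale /qnorm2 /qmul /qconj /=; ring.
transitivity (\sum_(a < d) \sum_(i < N) w i * qnorm2 (x i a)); last first.
  by under eq_bigr do rewrite frame_diag; rewrite sumr_const card_ord.
rewrite exchange_big /=; apply: eq_bigr => i _.
by rewrite -mulr_sumr -/(hnorm2 (x i)) x_unit mulr1.
Qed.

Lemma frame_row_sum j : \sum_(i < N) w i * qnorm2 (hinner (x j) (x i)) = 1.
Proof.
transitivity (\sum_(a < d) \sum_(b < d) \sum_(i < N)
    w i * qre (qmul (qmul (qconj (x j a)) (qmul (x i a) (qconj (x i b)))) (x j b))).
  under [RHS]eq_bigr do rewrite exchange_big; rewrite [RHS]exchange_big.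
  apply: eq_bigr => i _; rewrite qnorm2_hinner mulr_sumr.
  by apply: eq_bigr => a _; rewrite mulr_sumr.
rewrite -(x_unit j) /hnorm2; apply: eq_bigr => a _.
under eq_bigr => b _ do rewrite -qre_big_scale_sandwich.
rewrite (bigD1 a) //= big1 ?addr0 => [|b ba].
  by rewrite frame eqxx /qmul /qconj /qnorm2 /q1 /=; ring.
by rewrite frame eq_sym (negbTE ba) /qmul /qconj /q0 /=; ring.
Qed.

End TightFrame.

Lemma exists_offdiag_const (T : Type) (N : nat) (f : 'I_N -> 'I_N -> T) :
  (0 < N)%N -> (forall i j, f i j = f j i) ->
  (forall i j i' j' : 'I_N, (i < j)%N -> (i' < j')%N -> f i j = f i' j') ->
  exists c, forall i j, i != j -> f i j = c.
Proof.
move=> N_gt0 fC flt; case: (ltnP 1 N) => [N_gt1 | N_le1].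
  exists (f (Ordinal N_gt0) (Ordinal N_gt1)) => i j.
  by rewrite neq_ltn => /orP[] ij; [|rewrite fC]; apply: flt.
exists (f (Ordinal N_gt0) (Ordinal N_gt0)) => -[i ?] [j ?] /eqP[].
by apply: val_inj => /=; lia.
Qed.

Section EquiangularWeights.
Variables (R : realFieldType) (d N : nat) (n : 'I_N -> 'I_N -> R) (w : 'I_N -> R) (c : R).
Hypothesis d_gt1 : (1 < d)%N.
Hypothesis N_gt0 : (0 < N)%N.
Hypothesis n_diag : forall i, n i i = 1.
Hypothesis n_offdiag : forall i j, i != j -> n i j = c.
Hypothesis weight_sum : \sum_(i < N) w i = d%:R.
Hypothesis row_sum : forall j, \sum_(i < N) w i * n j i = 1.

Lemma equiangular_row j : w j + c * (d%:R - w j) = 1.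
Proof.
rewrite -[RHS](row_sum j) (bigD1 j) //= n_diag mulr1; congr (_ + _).
rewrite -weight_sum (bigD1 j) //= addrC addrK mulr_sumr.
by apply: eq_bigr => i ij; rewrite mulrC n_offdiag // eq_sym.
Qed.

Lemma offdiag_neq1 : c != 1.
Proof.
apply/eqP => c1; have := equiangular_row (Ordinal N_gt0).
by rewrite c1 mul1r addrC subrK => /eqP; rewrite pnatr_eq1 gtn_eqF.
Qed.

Lemma equiangular_weights j : w j = d%:R / N%:R.
Proof.
have c1_neq0 : 1 - c != 0 by rewrite subr_eq0 eq_sym offdiag_neq1.
have wE i : w i = (1 - c * d%:R) / (1 - c).
  apply/(canRL (mulfK c1_neq0)).
  by rewrite -[X in X - c * _](equiangular_row i); ring.
have N_neq0 : N%:R != 0 :> R by rewrite pnatr_eq0 -lt0n.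
apply/(canRL (mulfK N_neq0)); rewrite -weight_sum.
by rewrite (eq_bigr (fun=> w j)) => [|i _]; rewrite ?sumr_const ?card_ord ?mulr_natr // !wE.
Qed.

Lemma offdiag_value : (1 < N)%N -> c = (N%:R - d%:R) / (d%:R * (N%:R - 1)).
Proof.
move=> N_gt1.
have d_gt0 : 0 < d%:R :> R by rewrite ltr0n ltnW.
have N_gt0' : 0 < N%:R :> R by rewrite ltr0n.
have dN_neq0 : d%:R * (N%:R - 1) != 0 :> R.
  by rewrite mulf_neq0 ?gt_eqF // subr_gt0 ltr1n.
apply/(canRL (mulfK dN_neq0)).
have := equiangular_row (Ordinal N_gt0); rewrite equiangular_weights => row.
rewrite -[X in X - d%:R](mulr1 N%:R) -[X in N%:R * X]row.
by field; rewrite gt_eqF.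
Qed.

End EquiangularWeights.

Theorem proposition4p1 (R : realFieldType) (d N : nat)
  (hd : (1 < d)%N) (hN : (1 <= N)%N)
  (x : 'I_N -> 'I_d -> quat R) (w : 'I_N -> R)
  (h1 : forall i, hnorm2 (x i) = 1)
  (h2 : forall i j i' j' : 'I_N, (i < j)%N -> (i' < j')%N ->
          qnorm2 (hinner (x i) (x j)) = qnorm2 (hinner (x i') (x j')))
  (h3 : forall a b : 'I_d,
          \big[@qadd R/q0 R]_(i < N) qscale (w i) (qmul (x i a) (qconj (x i b)))
          = (if a == b then q1 R else q0 R)) :
  (forall i, w i = d%:R / N%:R) /\ tight_simplex x.
Proof.
pose n i j := qnorm2 (hinner (x i) (x j)).
have [c n_offdiag] : exists c, forall i j, i != j -> n i j = c.
  by apply: exists_offdiag_const => // i j; rewrite /n qnorm2_hinnerC.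
have n_diag i : n i i = 1.
  by apply: qnorm2_hinner_same_line (same_line_refl _); rewrite h1.
have row_sum := frame_row_sum h1 h3.
have weight_sum := frame_weight_sum h1 h3.
split; first exact: equiangular_weights hd hN n_diag n_offdiag weight_sum row_sum.
split; first exact: h1.
split=> i j ij.
- move/(qnorm2_hinner_same_line (h1 i) (h1 j)); rewrite -/(n i j) n_offdiag // => c1.
  by move: (offdiag_neq1 hd hN n_diag n_offdiag weight_sum row_sum); rewrite c1 eqxx.
- have N_gt1 : (1 < N)%N by move: ij; rewrite neq_ltn; case: i j => [i ?] [j ?] /=; lia.
  by rewrite -/(n i j) n_offdiag // (offdiag_value hd hN n_diag n_offdiag weight_sum row_sum).
Qed.
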